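(* Let $A,B\in\mathbb{R}^{3\times 3}$ form a bimatrix game satisfying Assumptions 1 and 3 below, and suppose $(A,B)$ is zero-sum (in the sense defined below). A transition diagram $D$ is combinatorially equivalent to the transition diagram of such a game if and only if $D$ satisfies the following five conditions: (1) No row of $D$ has three horizontal arrows pointing in the same direction and no column has three vertical arrows pointing in the same direction; (2) No three horizontal arrows between two columns point in the same direction and no three vertical arrows between two rows point in the same direction; (3) $D$ has no sinks; (4) $D$ has no sources; (5) $D$ has no alternating cycles. Moreover, up to combinatorial equivalence there are exactly 23 transition diagrams satisfying (1)–(5).
   Context: Let $\Sigma_A$ be the set of probability row vectors and $\Sigma_B$ the set of probability column vectors in $\mathbb{R}^3$. For a bimatrix game $(A,B)$ with $A=(a_{ij})$, $B=(b_{ij})$, define $\mathrm{BR}_A(q)=\operatorname{argmax}_{p\in\Sigma_A} pAq$ and $\mathrm{BR}_B(p)=\operatorname{argmax}_{q\in\Sigma_B} pBq$. A Nash equilibrium is a point $(\bar p,\bar q)\in\Sigma_A\times\Sigma_B$ with $\bar p\in \mathrm{BR}_A(\bar q)$ and $\bar q\in\mathrm{BR}_B(\bar p)$. Assumption 1 (non-degeneracy): $a_{ij}\neq a_{i'j}$ and $b_{ij}\neq b_{ij'}$ for all $i\neq i'$, $j\neq j'$. Assumption 3: the game has a unique Nash equilibrium, and it lies in the interior of $\Sigma_A\times\Sigma_B$. Two games $(A,B)$, $(C,D)$ are linearly equivalent if there are $e>0$, $g>0$, $f_j,h_i\in\mathbb{R}$ with $c_{ij}=e a_{ij}+f_j$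 and $d_{ij}=g b_{ij}+h_i$. A game is called zero-sum if it is linearly equivalent to a game $(C,D)$ with $C+D=0$. A transition diagram is a relation $\to$ on the nine cells $(i,j)$, $i,j\in\{1,2,3\}$, such that for every $j$ and every $i\neq i'$ exactly one of $(i,j)\to(i',j)$, $(i',j)\to(i,j)$ holds (vertical arrows), for every $i$ and every $j\neq j'$ exactly one of $(i,j)\to(i,j')$, $(i,j')\to(i,j)$ holds (horizontal arrows), and no other pairs are related. The transition diagram of a game $(A,B)$ satisfying Assumption 1 is given by $(i,j)\to(i',j)$ iff $a_{i'j}>a_{ij}$ and $(i,j)\to(i,j')$ iff $b_{ij'}>b_{ij}$. Condition (1) formally: for no $i$ and no ordering $\{j_1,j_2,j_3\}=\{1,2,3\}$ do we have $(i,j_1)\to(i,j_2)\to(i,j_3)\to(i,j_1)$; and for no $j$ and ordering $\{i_1,i_2,i_3\}=\{1,2,3\}$ do we have $(i_1,j)\to(i_2,j)\to(i_3,j)\to(i_1,j)$. Condition (2) formally: there are no $i\neq i'$ with $(i,j)\to(i',j)$ for all $j$, and no $j\neq j'$ with $(i,j)\to(i,j')$ for all $i$. A cell $(i,j)$ is a sink if $(i',j)\to(i,j)$ and $(i,j')\to(i,j)$ for all $i'\neq i$, $j'\neq j$; it is a source if $(i,j)\to(i',j)$ and $(i,j)\to(i,j')$ for all $i'\ne i$, $j'\ne j$. An alternating cycle is a sequence $(i_0,j_0),(i_1,j_1),\dots,(i_n,j_n)=(i_0,j_0)$ of cells, consecutive ones differing in exactly one coordinate, such that either (a) $(i_k,j_k)\to(i_{k+1},j_{k+1})$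 whenever $i_k\neq i_{k+1}$ and $(i_{k+1},j_{k+1})\to(i_k,j_k)$ whenever $j_k\neq j_{k+1}$, or (b) $(i_{k+1},j_{k+1})\to(i_k,j_k)$ whenever $i_k\neq i_{k+1}$ and $(i_k,j_k)\to(i_{k+1},j_{k+1})$ whenever $j_k\neq j_{k+1}$ (i.e. it becomes a directed loop after reversing all vertical or all horizontal arrows). Two transition diagrams $D_1,D_2$ are combinatorially equivalent if $D_2$ is obtained from $D_1$ by a permutation of rows, a permutation of columns, and possibly transposition (the transpose $D^T$ has $(j,i)\to(j',i')$ iff $(i,j)\to(i',j')$ in $D$). For games, this corresponds to $(A,B)$ versus $(PCQ,PDQ)$ or $(B',A')$ versus $(PCQ,PDQ)$ with $P,Q$ permutation matrices. *)

From HB Require Import structures.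
From mathcomp Require Import all_boot all_order fingroup perm all_algebra.
From mathcomp Require Import reals.
Set Implicit Arguments. Unset Strict Implicit. Unset Printing Implicit Defensive.
Import Order.TTheory GRing.Theory Num.Theory.
Local Open Scope ring_scope.

Section Games.
Variable R : realType.

Definition probRow (p : 'rV[R]_3) : Prop :=
  (forall j, 0 <= p 0 j) /\ \sum_j p 0 j = 1.
Definition probCol (q : 'cV[R]_3) : Prop :=
  (forall i, 0 <= q i 0) /\ \sum_i q i 0 = 1.

Definition payoff (p : 'rV[R]_3) (M : 'M[R]_3) (q : 'cV[R]_3) : R :=
  (p *m M *m q) 0 0.

Definition BR_A (A : 'M[R]_3) (q : 'cV[R]_3) (p : 'rV[R]_3) : Prop :=
  probRow p /\ forall p', probRow p' -> payoff p' A q <= payoff p A q.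
Definition BR_B (B : 'M[R]_3) (p : 'rV[R]_3) (q : 'cV[R]_3) : Prop :=
  probCol q /\ forall q', probCol q' -> payoff p B q' <= payoff p B q.

Definition nash (A B : 'M[R]_3) (p : 'rV[R]_3) (q : 'cV[R]_3) : Prop :=
  probRow p /\ probCol q /\ BR_A A q p /\ BR_B B p q.

Definition assumption1 (A B : 'M[R]_3) : Prop :=
  (forall i i' j, i != i' -> A i j != A i' j) /\
  (forall i j j', j != j' -> B i j != B i j').

Definition assumption3 (A B : 'M[R]_3) : Prop :=
  exists p q, [/\ nash A B p q,
    (forall j, 0 < p 0 j), (forall i, 0 < q i 0) &
    (forall p' q', nash A B p' q' -> p' = p /\ q' = q)].

(* (A,B) is linearly equivalent to a game (C,D) with C + D = 0 *)
Definition zero_sum (A B : 'M[R]_3) : Prop :=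
  exists (e g : R) (f h : 'I_3 -> R), [/\ 0 < e, 0 < g &
    forall i j, (e * A i j + f j) + (g * B i j + h i) = 0].

End Games.

Definition cell := ('I_3 * 'I_3)%type.   (* (row i, column j) *)
Definition diagram := {set cell * cell}.

Definition arrow (D : diagram) (c c' : cell) : bool := (c, c') \in D.

Definition is_diagram (D : diagram) : Prop :=
  (forall j i i', i != i' -> arrow D (i, j) (i', j) != arrow D (i', j) (i, j)) /\
  (forall i j j', j != j' -> arrow D (i, j) (i, j') != arrow D (i, j') (i, j)) /\
  (forall c c', arrow D c c' -> (c.1 == c'.1) != (c.2 == c'.2)).

Definition game_diagram (R : realType) (A B : 'M[R]_3) : diagram :=
  [set x : cell * cell |
     ((x.1.2 == x.2.2) && (A x.1.1 x.1.2 < A x.2.1 x.2.2)) ||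
     ((x.1.1 == x.2.1) && (B x.1.1 x.1.2 < B x.2.1 x.2.2))].

Definition cond1 (D : diagram) : Prop :=
  (forall i j1 j2 j3, j1 != j2 -> j2 != j3 -> j1 != j3 ->
     ~ [/\ arrow D (i, j1) (i, j2), arrow D (i, j2) (i, j3) & arrow D (i, j3) (i, j1)]) /\
  (forall j i1 i2 i3, i1 != i2 -> i2 != i3 -> i1 != i3 ->
     ~ [/\ arrow D (i1, j) (i2, j), arrow D (i2, j) (i3, j) & arrow D (i3, j) (i1, j)]).

Definition cond2 (D : diagram) : Prop :=
  (forall i i', i != i' -> ~ (forall j, arrow D (i, j) (i', j))) /\
  (forall j j', j != j' -> ~ (forall i, arrow D (i, j) (i, j'))).

Definition is_sink (D : diagram) (c : cell) : Prop :=
  (forall i', i' != c.1 -> arrow D (i', c.2) c) /\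
  (forall j', j' != c.2 -> arrow D (c.1, j') c).
Definition is_source (D : diagram) (c : cell) : Prop :=
  (forall i', i' != c.1 -> arrow D c (i', c.2)) /\
  (forall j', j' != c.2 -> arrow D c (c.1, j')).

Definition no_sink (D : diagram) : Prop := forall c, ~ is_sink D c.
Definition no_source (D : diagram) : Prop := forall c, ~ is_source D c.

Definition stepA (D : diagram) (c c' : cell) : bool :=
  ((c.1 != c'.1) && (c.2 == c'.2) && arrow D c c') ||
  ((c.1 == c'.1) && (c.2 != c'.2) && arrow D c' c).
Definition stepB (D : diagram) (c c' : cell) : bool :=
  ((c.1 != c'.1) && (c.2 == c'.2) && arrow D c' c) ||
  ((c.1 == c'.1) && (c.2 != c'.2) && arrow D c c').

Definition alternating_cycle (D : diagram) (s : seq cell) : Prop :=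
  s != [::] /\ (path.cycle (stepA D) s \/ path.cycle (stepB D) s).

Definition no_alt_cycle (D : diagram) : Prop := forall s, ~ alternating_cycle D s.

Definition good (D : diagram) : Prop :=
  [/\ cond1 D, cond2 D, no_sink D, no_source D & no_alt_cycle D].

Definition cell_map (s t : 'S_3) (b : bool) (c : cell) : cell :=
  if b then (t c.2, s c.1) else (s c.1, t c.2).

Definition comb_equiv (D1 D2 : diagram) : Prop :=
  exists (s t : 'S_3) (b : bool), forall c c',
    arrow D2 (cell_map s t b c) (cell_map s t b c') = arrow D1 c c'.

From mathcomp Require Import all_boot all_order fingroup perm all_algebra.
From mathcomp Require Import reals ring lra.
Set Implicit Arguments. Unset Strict Implicit. Unset Printing Implicit Defensive.
Import Order.TTheory GRing.Theory Num.Theory.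

(* Rescale the zero-sum game to C = e A + f = - (g B + h).  Vertical arrows of its
   transition diagram increase C and horizontal arrows decrease it, so no alternating
   cycle exists, and the arrows along a line follow the order of the payoffs, which gives
   (1).  At the interior equilibrium (p, q) all rows of C have the same q-average and all
   columns the same p-average, and this rules out strictly dominated rows or columns (2),
   strict saddle points (sinks) and strict anti-saddle points (sources).
   Conversely, a diagram is encoded by the orientations of its 18 arrows.  Running through
   the 6^6 codes satisfying (1) shows that the diagrams satisfying (1)-(5) are exactly the
   relabellings of 23 pairwise inequivalent ones, each the diagram of an integer zero-sum
   game (A, -A) whose equalizing strategies are interior, which makes the equilibrium
   unique. *)

Section ConvexCombinations.
Local Open Scope ring_scope.
Variables (R : realFieldType) (I : finType) (w : I -> R).
Hypotheses (w_gt0 : forall i, 0 < w i) (w_sum1 : \sum_i w i = 1).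

Lemma weights_nonempty : exists i : I, true.
Proof.
case: (pickP (@predT I)) => [i _|none]; first by exists i.
by move: w_sum1; rewrite big_pred0 // => /eqP; rewrite eq_sym oner_eq0.
Qed.

Lemma convex_shift (x : I -> R) c : \sum_i w i * (x i - c) = \sum_i w i * x i - c.
Proof. by rewrite (eq_bigr _ (fun i _ => mulrBr _ _ _)) sumrB -mulr_suml w_sum1 mul1r. Qed.

Lemma convex_le_max (x : I -> R) c : (forall i, x i <= c) -> \sum_i w i * x i <= c.
Proof.
move=> x_le; rewrite -subr_le0 -convex_shift; apply: sumr_le0 => i _.
by rewrite pmulr_rle0 // subr_le0.
Qed.

Lemma convex_ge_min (x : I -> R) c : (forall i, c <= x i) -> c <= \sum_i w i * x i.
Proof.
move=> x_ge; rewrite -subr_ge0 -convex_shift; apply: sumr_ge0 => i _.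
by rewrite pmulr_rge0 // subr_ge0.
Qed.

Lemma convex_lt_max (x : I -> R) c k : (forall i, x i <= c) -> x k < c -> \sum_i w i * x i < c.
Proof.
move=> x_le x_lt; rewrite -subr_lt0 -convex_shift (bigD1 k) //=.
have neg_k : w k * (x k - c) < 0 by rewrite pmulr_rlt0 ?subr_lt0.
have : \sum_(i | i != k) w i * (x i - c) <= 0.
  by apply: sumr_le0 => i _; rewrite pmulr_rle0 // subr_le0.
lra.
Qed.

Lemma convex_gt_min (x : I -> R) c k : (forall i, c <= x i) -> c < x k -> c < \sum_i w i * x i.
Proof.
move=> x_ge x_gt; rewrite -subr_gt0 -convex_shift (bigD1 k) //=.
have pos_k : 0 < w k * (x k - c) by rewrite pmulr_rgt0 // subr_gt0.
have : 0 <= \sum_(i | i != k) w i * (x i - c).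
  by apply: sumr_ge0 => i _; rewrite pmulr_rge0 // subr_ge0.
lra.
Qed.

Lemma convex_eq_max (x : I -> R) c :
  (forall i, x i <= c) -> \sum_i w i * x i = c -> forall i, x i = c.
Proof.
move=> x_le sum_c i; apply/eqP; rewrite eq_le x_le /= leNgt; apply/negP => lt_i.
by have := convex_lt_max x_le lt_i; rewrite sum_c ltxx.
Qed.

Lemma convex_eq_min (x : I -> R) c :
  (forall i, c <= x i) -> \sum_i w i * x i = c -> forall i, x i = c.
Proof.
move=> x_ge sum_c i; apply/eqP; rewrite eq_le x_ge andbT leNgt; apply/negP => gt_i.
by have := convex_gt_min x_ge gt_i; rewrite sum_c ltxx.
Qed.

End ConvexCombinations.

Section EqualizedPayoffs.
Local Open Scope ring_scope.
Variables (R : realFieldType) (I J : finType) (C : I -> J -> R) (p : I -> R) (q : J -> R).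
Variables (u v : R).
Hypotheses (p_gt0 : forall i, 0 < p i) (p_sum1 : \sum_i p i = 1).
Hypotheses (q_gt0 : forall j, 0 < q j) (q_sum1 : \sum_j q j = 1).
Hypotheses (row_avg : forall i, \sum_j C i j * q j = u).
Hypotheses (col_avg : forall j, \sum_i p i * C i j = v).

Lemma equalized_values : u = v.
Proof.
transitivity (\sum_i p i * \sum_j C i j * q j).
  by rewrite (eq_bigr (fun i => p i * u)) => [|i _]; [rewrite -mulr_suml p_sum1 mul1r|rewrite row_avg].
transitivity (\sum_j (\sum_i p i * C i j) * q j); last first.
  by rewrite (eq_bigr (fun j => v * q j)) => [|j _]; [rewrite -mulr_sumr q_sum1 mulr1|rewrite col_avg].
rewrite (eq_bigr (fun i => \sum_j p i * C i j * q j)) => [|i _]; last first.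
  by rewrite mulr_sumr; apply: eq_bigr => j _; rewrite mulrA.
by rewrite exchange_big; apply: eq_bigr => j _; rewrite mulr_suml.
Qed.

Lemma no_dominated_row i i' : ~ (forall j, C i j < C i' j).
Proof.
move=> dom; have [j0 _] := weights_nonempty q_sum1.
have : \sum_j C i j * q j < \sum_j C i' j * q j.
  by apply: ltr_sum => [|j _]; [apply/hasP; exists j0; rewrite ?mem_index_enum | rewrite ltr_pM2r].
by rewrite !row_avg ltxx.
Qed.

Lemma no_dominated_col j j' : ~ (forall i, C i j < C i j').
Proof.
move=> dom; have [i0 _] := weights_nonempty p_sum1.
have : \sum_i p i * C i j < \sum_i p i * C i j'.
  by apply: ltr_sum => [|i _]; [apply/hasP; exists i0; rewrite ?mem_index_enum | rewrite ltr_pM2l].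
by rewrite !col_avg ltxx.
Qed.

Lemma other_index (j : J) : (1 < #|J|)%N -> exists j', j' != j.
Proof.
case/card_gt1P => [x [y [_ _ xy]]]; case: (eqVneq x j) => [xj|]; last by exists x.
by exists y; rewrite -xj eq_sym.
Qed.

Lemma no_strict_saddle i j : (1 < #|J|)%N ->
  (forall i', i' != i -> C i' j < C i j) -> (forall j', j' != j -> C i j < C i j') -> False.
Proof.
move=> J_gt1 col_max row_min; have [j' j'j] := other_index j J_gt1.
have ge_j k : C i j <= C i k by case: (eqVneq k j) => [->|/row_min/ltW].
have le_i k : C k j <= C i j by case: (eqVneq k i) => [->|/col_max/ltW].
have u_gt : C i j < u.
  rewrite -(row_avg i) (eq_bigr _ (fun k _ => mulrC (C i k) (q k))).
  exact: (@convex_gt_min _ _ _ q_gt0 q_sum1 (C i) _ _ ge_j (row_min j' j'j)).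
have v_le : v <= C i j.
  by rewrite -(col_avg j); exact: (@convex_le_max _ _ _ p_gt0 p_sum1 (C^~ j) _ le_i).
by move: v_le; rewrite -equalized_values => /(lt_le_trans u_gt); rewrite ltxx.
Qed.

Lemma no_strict_antisaddle i j : (1 < #|J|)%N ->
  (forall i', i' != i -> C i j < C i' j) -> (forall j', j' != j -> C i j' < C i j) -> False.
Proof.
move=> J_gt1 col_min row_max; have [j' j'j] := other_index j J_gt1.
have le_j k : C i k <= C i j by case: (eqVneq k j) => [->|/row_max/ltW].
have ge_i k : C i j <= C k j by case: (eqVneq k i) => [->|/col_min/ltW].
have u_lt : u < C i j.
  rewrite -(row_avg i) (eq_bigr _ (fun k _ => mulrC (C i k) (q k))).
  exact: (@convex_lt_max _ _ _ q_gt0 q_sum1 (C i) _ _ le_j (row_max j' j'j)).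
have v_ge : C i j <= v.
  by rewrite -(col_avg j); exact: (@convex_ge_min _ _ _ p_gt0 p_sum1 (C^~ j) _ ge_i).
by move: v_ge; rewrite -equalized_values => /(lt_le_trans u_lt); rewrite ltxx.
Qed.

End EqualizedPayoffs.

Lemma no_increasing_cycle (R : realFieldType) (T : eqType) (F : T -> R) s :
  s != [::] -> ~~ path.cycle (fun x y => (F x < F y)%R) s.
Proof.
have F_trans : transitive (fun x y => (F x < F y)%R) by move=> y x z; apply: lt_trans.
case: s => [//|x s] _; apply/negP => /= /(order_path_min F_trans).
by rewrite all_rcons ltxx.
Qed.

Section PotentialDiagram.
Local Open Scope ring_scope.
Variables (R : realFieldType) (D : diagram) (C : 'I_3 -> 'I_3 -> R).

Definition potential : Prop :=
  (forall i i' j, i != i' -> arrow D (i, j) (i', j) -> C i j < C i' j) /\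
  (forall i j j', j != j' -> arrow D (i, j) (i, j') -> C i j' < C i j).

Hypothesis C_potential : potential.

Lemma potential_no_alt_cycle : no_alt_cycle D.
Proof.
have [C_col C_row] := C_potential.
move=> s [s_nil [cycA|cycB]].
  case/negP: (no_increasing_cycle (fun c : cell => C c.1 c.2) s_nil).
  apply: (sub_cycle _ cycA) => -[i j] [i' j'].
  case/orP=> [/andP[/andP[ii' /eqP/= <-]]|/andP[/andP[/eqP/= <- jj']]].
    exact: C_col.
  by apply: C_row; rewrite eq_sym.
case/negP: (no_increasing_cycle (fun c : cell => - C c.1 c.2) s_nil).
apply: (sub_cycle _ cycB) => -[i j] [i' j'].
case/orP=> [/andP[/andP[ii' /eqP/= <-]]|/andP[/andP[/eqP/= <- jj']]] arr; rewrite ltrN2.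
  by apply: C_col arr; rewrite eq_sym.
exact: C_row arr.
Qed.

Variables (p q : 'I_3 -> R) (u v : R).
Hypotheses (p_gt0 : forall i, 0 < p i) (p_sum1 : \sum_i p i = 1).
Hypotheses (q_gt0 : forall j, 0 < q j) (q_sum1 : \sum_j q j = 1).
Hypotheses (row_avg : forall i, \sum_j C i j * q j = u).
Hypotheses (col_avg : forall j, \sum_i p i * C i j = v).

Lemma potential_cond2 : cond2 D.
Proof.
have [C_col C_row] := C_potential.
split=> [i i' ii' arr|j j' jj' arr].
  by apply: (@no_dominated_row _ _ _ _ _ _ q_gt0 q_sum1 row_avg i i') => j; apply: C_col (arr j).
by apply: (@no_dominated_col _ _ _ _ _ _ p_gt0 p_sum1 col_avg j' j) => i; apply: C_row (arr i).
Qed.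

Lemma potential_no_sink : no_sink D.
Proof.
have [C_col C_row] := C_potential.
move=> [i j] [/= into_col into_row].
apply: (@no_strict_saddle _ _ _ _ _ _ _ _ p_gt0 p_sum1 q_gt0 q_sum1 row_avg col_avg i j).
- by rewrite card_ord.
- by move=> i' i'i; apply: C_col (into_col i' i'i).
- by move=> j' j'j; apply: C_row (into_row j' j'j).
Qed.

Lemma potential_no_source : no_source D.
Proof.
have [C_col C_row] := C_potential.
move=> [i j] [/= out_col out_row].
apply: (@no_strict_antisaddle _ _ _ _ _ _ _ _ p_gt0 p_sum1 q_gt0 q_sum1 row_avg col_avg i j).
- by rewrite card_ord.
- by move=> i' i'i; apply: C_col (out_col i' i'i); rewrite eq_sym.
- by move=> j' j'j; apply: C_row (out_row j' j'j); rewrite eq_sym.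
Qed.

Lemma potential_good : cond1 D -> good D.
Proof.
by split; [|exact: potential_cond2|exact: potential_no_sink|exact: potential_no_source
  |exact: potential_no_alt_cycle].
Qed.

End PotentialDiagram.

Section ZeroSumGames.
Local Open Scope ring_scope.
Variable R : realType.
Implicit Types (A B : 'M[R]_3) (p : 'rV[R]_3) (q : 'cV[R]_3).

Lemma payoff_rows A p q : payoff p A q = \sum_i p 0 i * (A *m q) i 0.
Proof. by rewrite /payoff -mulmxA mxE. Qed.

Lemma payoff_cols A p q : payoff p A q = \sum_j (p *m A) 0 j * q j 0.
Proof. by rewrite /payoff mxE. Qed.

Lemma payoff_delta_row A i q : payoff (delta_mx 0 i) A q = (A *m q) i 0.
Proof. by rewrite /payoff -mulmxA -rowE mxE. Qed.

Lemma payoff_delta_col A p j : payoff p A (delta_mx j 0) = (p *m A) 0 j.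
Proof. by rewrite /payoff -colE mxE. Qed.

Lemma probRow_delta i : probRow (delta_mx 0 i : 'rV[R]_3).
Proof.
split=> [j|]; first by rewrite mxE ler0n.
rewrite (bigD1 i) //= big1 => [|j ji]; first by rewrite mxE !eqxx addr0.
by rewrite mxE (negbTE ji) andbF.
Qed.

Lemma probCol_delta j : probCol (delta_mx j 0 : 'cV[R]_3).
Proof.
split=> [i|]; first by rewrite mxE ler0n.
rewrite (bigD1 j) //= big1 => [|i ij]; first by rewrite mxE !eqxx addr0.
by rewrite mxE (negbTE ij).
Qed.

Lemma interior_best_row A p q : probRow p -> (forall i, 0 < p 0 i) -> BR_A A q p ->
  forall i, (A *m q) i 0 = payoff p A q.
Proof.
move=> [_ p_sum1] p_gt0 [_ br]; apply: (convex_eq_max p_gt0 p_sum1) => [i|].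
  by rewrite -payoff_delta_row; apply/br/probRow_delta.
by rewrite payoff_rows.
Qed.

Lemma interior_best_col B p q : probCol q -> (forall j, 0 < q j 0) -> BR_B B p q ->
  forall j, (p *m B) 0 j = payoff p B q.
Proof.
move=> [_ q_sum1] q_gt0 [_ br]; apply: (convex_eq_max q_gt0 q_sum1) => [j|].
  by rewrite -payoff_delta_col; apply/br/probCol_delta.
by rewrite payoff_cols; apply: eq_bigr => j _; rewrite mulrC.
Qed.

Lemma game_arrow_col A B i i' j :
  i != i' -> arrow (game_diagram A B) (i, j) (i', j) = (A i j < A i' j).
Proof. by move=> ii'; rewrite /arrow inE /= eqxx (negbTE ii') orbF. Qed.

Lemma game_arrow_row A B i j j' :
  j != j' -> arrow (game_diagram A B) (i, j) (i, j') = (B i j < B i j').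
Proof. by move=> jj'; rewrite /arrow inE /= eqxx (negbTE jj'). Qed.

Lemma game_diagram_cond1 A B : cond1 (game_diagram A B).
Proof.
split=> [i j1 j2 j3 n12 n23 n13|j i1 i2 i3 n12 n23 n13]; have n31 := n13; rewrite eq_sym in n31.
  rewrite !game_arrow_row // => -[lt12 lt23 lt31].
  by have := lt_trans (lt_trans lt12 lt23) lt31; rewrite ltxx.
rewrite !game_arrow_col // => -[lt12 lt23 lt31].
by have := lt_trans (lt_trans lt12 lt23) lt31; rewrite ltxx.
Qed.

Lemma game_is_diagram A B : assumption1 A B -> is_diagram (game_diagram A B).
Proof.
move=> [A_col B_row]; split; [|split].
- move=> j i i' ii'; rewrite !game_arrow_col // 1?eq_sym //.
  by case: ltgtP (A_col i i' j ii') => // ->; rewrite eqxx.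
- move=> i j j' jj'; rewrite !game_arrow_row // 1?eq_sym //.
  by case: ltgtP (B_row i j j' jj') => // ->; rewrite eqxx.
- move=> [i j] [i' j']; rewrite /arrow inE /= => /orP[/andP[/eqP <- lt]|/andP[/eqP <- lt]].
    by rewrite eqxx; case: (eqVneq i i') lt => [->|]; rewrite ?ltxx.
  by rewrite eqxx; case: (eqVneq j j') lt => [->|]; rewrite ?ltxx.
Qed.

Lemma zero_sum_game_good A B : assumption3 A B -> zero_sum A B -> good (game_diagram A B).
Proof.
move=> [p [q [[pP [qP [brA brB]]] p_gt0 q_gt0 _]]] [e [g [f [h [e_gt0 g_gt0 zs]]]]].
pose C i j := e * A i j + f j.
have CB i j : C i j = - (g * B i j + h i) by apply/eqP; rewrite -addr_eq0 zs.
apply: (@potential_good _ _ C _ (fun i => p 0 i) (fun j => q j 0)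
  (e * payoff p A q + \sum_j f j * q j 0) (- (g * payoff p B q + \sum_i p 0 i * h i))).
- split=> [i i' j ii'|i j j' jj']; first by rewrite game_arrow_col // => lt; rewrite ltrD2r ltr_pM2l.
  by rewrite game_arrow_row // => lt; rewrite !CB ltrN2 ltrD2r ltr_pM2l.
- exact: p_gt0.
- exact: pP.2.
- exact: q_gt0.
- exact: qP.2.
- move=> i; rewrite -(interior_best_row pP p_gt0 brA i) mxE mulr_sumr -big_split /=.
  by apply: eq_bigr => j _; rewrite mulrDl mulrA.
- move=> j; rewrite -(interior_best_col qP q_gt0 brB j) mxE mulr_sumr -big_split /= -sumrN.
  by apply: eq_bigr => i _; rewrite CB; ring.
- exact: game_diagram_cond1.
Qed.

End ZeroSumGames.

Section Acyclicity.
Variables (T : finType) (e : rel T).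

Definition core (S : seq T) : seq T := [seq x <- S | has (e^~ x) S].

Definition acyclicb (S : seq T) : bool := iter (size S) core S == [::].

Lemma core_cycle s S : path.cycle e s -> {subset s <= S} -> {subset s <= core S}.
Proof.
move=> cyc sS x xs; rewrite mem_filter sS // andbT.
by apply/hasP; exists (prev s x); [apply: sS; rewrite mem_prev|exact: prev_cycle].
Qed.

Lemma cycle_of_preds S x0 : x0 \in S -> {in S, forall x, has (e^~ x) S} ->
  exists2 s, s != [::] & path.cycle e s.
Proof.
move=> x0S preds; pose pr x := nth x S (find (e^~ x) S).
have prS : {homo pr : x / x \in S} by move=> x /preds; rewrite has_find; apply: mem_nth.
have e_pr x : x \in S -> e (pr x) x by move=> xS; exact: (nth_find x (preds x xS)).
have [n lt_n loop] : exists2 n, n < #|T| & iter #|T| pr x0 = iter n pr x0.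
  have /trajectP[n lt_n ->] : looping pr x0 #|T|; last by exists n.
  apply: contraT; rewrite -looping_uniq => /card_uniqP card_traject.
  by have := max_card (mem (traject pr x0 #|T|.+1)); rewrite card_traject size_traject ltnn.
have yS : iter n pr x0 \in S by apply: iter_in.
have loop_y : iter (#|T| - n) pr (iter n pr x0) = iter n pr x0.
  by rewrite -iterD (subnK (ltnW lt_n)).
move: loop_y; rewrite -(prednK (_ : 0 < #|T| - n)) ?subn_gt0 //.
move: (iter n pr x0) yS (#|T| - n).-1 => y yS m loop_m.
have fcyc : fcycle pr (traject pr y m.+1).
  have last_y : iter m pr (pr y) = y by rewrite -iterSr.
  by rewrite /= -[X in rcons _ X]last_y -trajectSr fpath_traject.
exists (rev (traject pr y m.+1)); first by rewrite -size_eq0 size_rev size_traject.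
rewrite rev_cycle; apply: (sub_in_cycle (P := [pred x | x \in S]) (e := frel pr) _ _ fcyc).
  by move=> a b aS _ /eqP <-; exact: e_pr.
by apply/allP => _ /trajectP[k _ ->]; rewrite inE; apply: iter_in.
Qed.

Lemma iter_core_cycle k s S : path.cycle e s -> {subset s <= S} -> {subset s <= iter k core S}.
Proof. by move=> cyc sS; elim: k => // k IH; rewrite iterS; apply: core_cycle. Qed.

Lemma iter_core_nil k : iter k core [::] = [::].
Proof. by elim: k => // k IH; rewrite iterS IH. Qed.

Lemma iter_core_nonnil k S : size S <= k -> iter k core S != [::] ->
  exists2 s, s != [::] & path.cycle e s.
Proof.
elim: k S => [|k IH] S; first by rewrite leqn0 size_eq0 => /eqP->.
move=> S_le; rewrite iterSr.
have [preds|not_all] := boolP (all (fun x => has (e^~ x) S) S).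
  case: S preds S_le => [|x0 S'] preds _; first by rewrite (_ : core [::] = [::]) // iter_core_nil.
  by move=> _; apply: (cycle_of_preds (mem_head x0 S')); apply/allP.
apply: IH; rewrite -ltnS (leq_trans _ S_le) //.
by rewrite ltn_neqAle size_filter count_size andbT -all_count.
Qed.

Lemma acyclicP S : (forall x, x \in S) ->
  reflect (forall s, s != [::] -> ~~ path.cycle e s) (acyclicb S).
Proof.
move=> S_all; apply: (iffP eqP) => [core_nil [//|x s] _|acyc]; last first.
  by apply/eqP; apply: contraT => /(iter_core_nonnil (leqnn _))[s /acyc/negP].
apply/negP => cyc; have := iter_core_cycle (size S) cyc (fun y _ => S_all y) (mem_head x s).
by rewrite core_nil.
Qed.
End Acyclicity.

Notation o0 := (@Ordinal 3 0 isT).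
Notation o1 := (@Ordinal 3 1 isT).
Notation o2 := (@Ordinal 3 2 isT).
Definition ords : seq 'I_3 := [:: o0; o1; o2].
Definition cells : seq cell := [seq (i, j) | i <- ords, j <- ords].

Lemma ord3P (i : 'I_3) : [\/ i = o0, i = o1 | i = o2].
Proof. by case: i => [[|[|[|?]]] ?] //; [apply: Or31|apply: Or32|apply: Or33]; apply: val_inj. Qed.

Ltac ord3_cases i := case: (ord3P i) => ->.

Lemma mem_ords i : i \in ords.
Proof. by ord3_cases i. Qed.

Lemma mem_cells c : c \in cells.
Proof. by case: c => i j; apply/allpairsP; exists (i, j); rewrite !mem_ords. Qed.

Lemma all_ordsP (P : pred 'I_3) : reflect (forall i, P i) (all P ords).
Proof. by apply: (iffP allP) => P_all i => [|_]; apply: P_all; rewrite mem_ords. Qed.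

Lemma all_cellsP (P : pred cell) : reflect (forall c, P c) (all P cells).
Proof. by apply: (iffP allP) => P_all c => [|_]; apply: P_all; rewrite mem_cells. Qed.

Definition lines : seq (cell * cell * cell) :=
  [seq ((o0, j), (o1, j), (o2, j)) | j <- ords] ++ [seq ((i, o0), (i, o1), (i, o2)) | i <- ords].

Definition line_code (a : cell -> cell -> bool) (l : cell * cell * cell) : seq bool :=
  let: (x, y, z) := l in [:: a x y; a x z; a y z].

Definition encode (a : cell -> cell -> bool) : seq bool := flatten [seq line_code a l | l <- lines].

(* Bit [3 j + (i + i').-1] of a code orients the rows [i < i'] in column [j] and
   bit [9 + 3 i + (j + j').-1] the columns [j < j'] in row [i]: (k + k').-1 numbers
   the pairs 01, 02, 12 as 0, 1, 2, as in [line_code]. *)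
Definition decode (x : seq bool) (c c' : cell) : bool :=
  let: ((i, j), (i', j')) := (c, c') in
  if j == j' :> nat then
    if i < i' then nth false x (3 * j + (i + i').-1)
    else if i' < i then ~~ nth false x (3 * j + (i + i').-1) else false
  else if i == i' :> nat then
    if j < j' then nth false x (9 + 3 * i + (j + j').-1)
    else if j' < j then ~~ nth false x (9 + 3 * i + (j + j').-1) else false
  else false.

Definition diagram_of (x : seq bool) : diagram := [set e | decode x e.1 e.2].

Lemma arrow_diagram_of x c c' : arrow (diagram_of x) c c' = decode x c c'.
Proof. by rewrite /arrow inE. Qed.

Lemma diagram_of_is_diagram x : is_diagram (diagram_of x).
Proof.
split; [|split].
- move=> j i i'; rewrite !arrow_diagram_of /decode; ord3_cases j; ord3_cases i; ord3_cases i' => //= _;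
    by case: (nth false x _).
- move=> i j j'; rewrite !arrow_diagram_of /decode; ord3_cases i; ord3_cases j; ord3_cases j' => //= _;
    by case: (nth false x _).
- move=> [i j] [i' j']; rewrite arrow_diagram_of /decode.
  by ord3_cases i; ord3_cases j; ord3_cases i'; ord3_cases j'.
Qed.

Lemma eq_encode a b : a =2 b -> encode a = encode b.
Proof. by move=> ab; congr flatten; apply: eq_map => -[[x y] z]; rewrite /= !ab. Qed.

Lemma decodeK x : size x = 18 -> encode (decode x) = x.
Proof. by do 18![case: x => [//|? x]]; case: x. Qed.

Lemma arrow_flip_col D j i i' :
  is_diagram D -> i != i' -> arrow D (i', j) (i, j) = ~~ arrow D (i, j) (i', j).
Proof. by move=> [D_col _] /(D_col j); case: (arrow D _ _) => [/negbTE|/negPn]. Qed.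

Lemma arrow_flip_row D i j j' :
  is_diagram D -> j != j' -> arrow D (i, j') (i, j) = ~~ arrow D (i, j) (i, j').
Proof. by move=> [_ [D_row _]] /(D_row i); case: (arrow D _ _) => [/negbTE|/negPn]. Qed.

Lemma decode_encode D : is_diagram D -> forall c c', decode (encode (arrow D)) c c' = arrow D c c'.
Proof.
move=> DD [i j] [i' j']; have [_ [_ D_line]] := DD.
ord3_cases i; ord3_cases j; ord3_cases i'; ord3_cases j'; rewrite /decode /=;
  first [ done | by rewrite arrow_flip_col ?negbK | by rewrite arrow_flip_row ?negbK
        | by apply/esym/negP => /D_line ].
Qed.

Lemma diagram_ofK D : is_diagram D -> diagram_of (encode (arrow D)) = D.
Proof. by move=> DD; apply/setP => -[c c']; rewrite inE /= decode_encode. Qed.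

Lemma encode_diagram_of x : size x = 18 -> encode (arrow (diagram_of x)) = x.
Proof. by move=> x18; rewrite (eq_encode (arrow_diagram_of x)) decodeK. Qed.

Definition relabel (g : cell -> cell) (D : diagram) : diagram := [set e | (g e.1, g e.2) \in D].

Lemma arrow_relabel g D c c' : arrow (relabel g D) c c' = arrow D (g c) (g c').
Proof. by rewrite /arrow inE. Qed.

Lemma eq_relabel g h D : g =1 h -> relabel g D = relabel h D.
Proof. by move=> gh; apply/setP => -[c c']; rewrite !inE /= !gh. Qed.

Lemma comb_equivE D1 D2 : comb_equiv D1 D2 <-> exists s t b, D1 = relabel (cell_map s t b) D2.
Proof.
split=> [[s [t [b equiv]]]|[s [t [b ->]]]]; exists s, t, b; last by move=> c c'; rewrite arrow_relabel.
by apply/setP => -[c c']; rewrite inE; exact: esym (equiv c c').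
Qed.

Lemma cell_map_inv (s t : 'S_3) b : exists s' t' : 'S_3, cancel (cell_map s' t' b) (cell_map s t b).
Proof.
by case: b; [exists t^-1%g, s^-1%g|exists s^-1%g, t^-1%g] => -[i j]; rewrite /cell_map /= !permKV.
Qed.

Lemma cell_map_comp (s1 t1 s2 t2 : 'S_3) b1 b2 :
  exists (s t : 'S_3) b, cell_map s2 t2 b2 \o cell_map s1 t1 b1 =1 cell_map s t b.
Proof.
case: b1; case: b2; [exists (s1 * t2)%g, (t1 * s2)%g, false|exists (s1 * t2)%g, (t1 * s2)%g, true
  |exists (s1 * s2)%g, (t1 * t2)%g, true|exists (s1 * s2)%g, (t1 * t2)%g, false];
  by move=> [i j]; rewrite /cell_map /= !permM.
Qed.

Lemma comb_equiv_sym D1 D2 : comb_equiv D1 D2 -> comb_equiv D2 D1.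
Proof.
move=> [s [t [b equiv]]]; have [s' [t' inv]] := cell_map_inv s t b.
by exists s', t', b => c c'; rewrite -equiv !inv.
Qed.

Lemma comb_equiv_trans D1 D2 D3 : comb_equiv D1 D2 -> comb_equiv D2 D3 -> comb_equiv D1 D3.
Proof.
move=> [s1 [t1 [b1 equiv12]]] [s2 [t2 [b2 equiv23]]].
have [s [t [b comp]]] := cell_map_comp s1 t1 s2 t2 b1 b2.
by exists s, t, b => c c'; rewrite -!comp /= equiv23 equiv12.
Qed.

Lemma relabel_is_diagram (s t : 'S_3) b D : is_diagram D -> is_diagram (relabel (cell_map s t b) D).
Proof.
have s_neq i i' : i != i' -> s i != s i' by rewrite (inj_eq perm_inj).
have t_neq j j' : j != j' -> t j != t j' by rewrite (inj_eq perm_inj).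
move=> [D_col [D_row D_line]]; split; [|split].
- by move=> j i i' /s_neq ii'; rewrite !arrow_relabel; case: b => /=; [apply: D_row|apply: D_col].
- by move=> i j j' /t_neq jj'; rewrite !arrow_relabel; case: b => /=; [apply: D_col|apply: D_row].
- move=> c c'; rewrite arrow_relabel => /D_line; rewrite /cell_map.
  by case: b; rewrite /= !(inj_eq perm_inj) // eq_sym.
Qed.

Definition perm_tables : seq (seq 'I_3) :=
  [:: [:: o0; o1; o2]; [:: o0; o2; o1]; [:: o1; o0; o2];
      [:: o1; o2; o0]; [:: o2; o0; o1]; [:: o2; o1; o0]].

Definition tab (l : seq 'I_3) (i : 'I_3) : 'I_3 := nth o0 l i.

Lemma perm_table (s : 'S_3) : exists2 l, l \in perm_tables & s =1 tab l.
Proof.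
exists [:: s o0; s o1; s o2]; last by move=> i; ord3_cases i.
have : uniq (map s ords) by rewrite map_inj_uniq //; exact: perm_inj.
by rewrite /=; case: (ord3P (s o0)) => ->; case: (ord3P (s o1)) => ->; case: (ord3P (s o2)) => ->.
Qed.

Lemma table_perm l : l \in perm_tables -> exists s : 'S_3, s =1 tab l.
Proof.
move=> l_in; suff tab_inj : injective (tab l) by exists (perm tab_inj) => i; rewrite permE.
by move: l_in; rewrite !inE => /or4P[|||/orP[|/orP[]]] /eqP-> i j; ord3_cases i; ord3_cases j.
Qed.

Definition relabelling (k : seq 'I_3 * seq 'I_3 * bool) (c : cell) : cell :=
  let: (l1, l2, b) := k in if b then (tab l2 c.2, tab l1 c.1) else (tab l1 c.1, tab l2 c.2).

Definition relabellings : seq (seq 'I_3 * seq 'I_3 * bool) :=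
  [seq (l.1, l.2, b) | l <- [seq (l1, l2) | l1 <- perm_tables, l2 <- perm_tables],
                       b <- [:: false; true]].

Lemma relabelling_perm k : k \in relabellings -> exists s t b, relabelling k =1 cell_map s t b.
Proof.
move=> /allpairsP[[l b] [/allpairsP[[l1 l2] [l1_in l2_in ->]] _ ->]].
have [s s_l1] := table_perm l1_in; have [t t_l2] := table_perm l2_in.
by exists s, t, b => c; rewrite /cell_map /= s_l1 t_l2.
Qed.

Lemma perm_relabelling (s t : 'S_3) b :
  exists2 k, k \in relabellings & cell_map s t b =1 relabelling k.
Proof.
have [l1 l1_in s_l1] := perm_table s; have [l2 l2_in t_l2] := perm_table t.
exists (l1, l2, b); last by move=> c; rewrite /cell_map /= s_l1 t_l2.
apply/allpairsP; exists ((l1, l2), b); split=> //; first exact: allpairs_f.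
by case: b.
Qed.

Lemma comb_equivP D1 D2 :
  comb_equiv D1 D2 <-> exists2 k, k \in relabellings & D1 = relabel (relabelling k) D2.
Proof.
rewrite comb_equivE; split=> [[s [t [b ->]]]|[k k_in ->]].
  by have [k k_in st_k] := perm_relabelling s t b; exists k; rewrite // (eq_relabel _ st_k).
by have [s [t [b k_st]]] := relabelling_perm k_in; exists s, t, b; apply: eq_relabel.
Qed.

Definition relabel_code (g : cell -> cell) (x : seq bool) : seq bool :=
  encode (fun c c' => decode x (g c) (g c')).

Lemma relabel_diagram_of k x : k \in relabellings ->
  relabel (relabelling k) (diagram_of x) = diagram_of (relabel_code (relabelling k) x).
Proof.
move=> k_in; have [s [t [b k_st]]] := relabelling_perm k_in.
have := relabel_is_diagram s t b (diagram_of_is_diagram x); rewrite -(eq_relabel _ k_st).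
move=> /diagram_ofK <-; congr diagram_of; apply: eq_encode => c c'.
by rewrite arrow_relabel arrow_diagram_of.
Qed.

(* The values of [line_code] on a line whose arrows form no directed 3-cycle. *)
Definition line_codes : seq (seq bool) :=
  [:: [:: true; true; true]; [:: true; true; false]; [:: true; false; false];
      [:: false; true; true]; [:: false; false; true]; [:: false; false; false]].

Fixpoint line_words n : seq (seq bool) :=
  if n is n'.+1 then [seq l ++ w | l <- line_codes, w <- line_words n'] else [:: [::]].

Lemma flatten_line_words ls : all (mem line_codes) ls -> flatten ls \in line_words (size ls).
Proof.
elim: ls => [//|l ls IH] /andP[l_in /IH ls_in].
exact: (allpairs_f (fun l w => l ++ w) l_in ls_in).
Qed.

Lemma line_code_acyclic (a : cell -> cell -> bool) x y z :
  a y x = ~~ a x y -> a z x = ~~ a x z -> a z y = ~~ a y z ->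
  ~ [/\ a x y, a y z & a z x] -> ~ [/\ a x z, a z y & a y x] ->
  line_code a (x, y, z) \in line_codes.
Proof.
move=> -> -> ->; rewrite /line_code.
by case: (a x y); case: (a x z); case: (a y z) => //= cyc1 cyc2; [case: cyc1|case: cyc2].
Qed.

Lemma encode_line_words D : is_diagram D -> cond1 D -> encode (arrow D) \in line_words 6.
Proof.
move=> DD [rows cols]; apply: (flatten_line_words (ls := [seq line_code (arrow D) l | l <- lines])).
apply/allP => _ /mapP[l /[!mem_cat] /orP[] /mapP[k _ ->] ->]; apply: line_code_acyclic;
  try by [rewrite arrow_flip_col|rewrite arrow_flip_row].
- by move=> cyc; apply: (cols k o0 o1 o2).
- by move=> cyc; apply: (cols k o0 o2 o1).
- by move=> cyc; apply: (rows k o0 o1 o2).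
- by move=> cyc; apply: (rows k o0 o2 o1).
Qed.


(* The boolean tests compare ordinals as [nat]s, on which [vm_compute] is an order of
   magnitude faster. *)
Lemma nat_ord_eqE (i j : 'I_3) : (i == j :> nat) = (i == j).
Proof. by []. Qed.

Section DiagramChecks.
Variable a : cell -> cell -> bool.

Definition cond1b : bool :=
  all (fun l : cell * cell * cell => let: (x, y, z) := l in
    ~~ [&& a x y, a y z & a z x] && ~~ [&& a x z, a z y & a y x]) lines.

Definition cond2b : bool :=
  all (fun i : 'I_3 => all (fun i' : 'I_3 =>
    (i != i' :> nat) ==> ~~ all (fun j : 'I_3 => a (i, j) (i', j)) ords) ords) ords &&
  all (fun j : 'I_3 => all (fun j' : 'I_3 =>
    (j != j' :> nat) ==> ~~ all (fun i : 'I_3 => a (i, j) (i, j')) ords) ords) ords.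

Definition no_sinkb : bool :=
  all (fun c : cell => ~~ (all (fun i' : 'I_3 => (i' != c.1 :> nat) ==> a (i', c.2) c) ords &&
                    all (fun j' : 'I_3 => (j' != c.2 :> nat) ==> a (c.1, j') c) ords)) cells.

Definition no_sourceb : bool :=
  all (fun c : cell => ~~ (all (fun i' : 'I_3 => (i' != c.1 :> nat) ==> a c (i', c.2)) ords &&
                    all (fun j' : 'I_3 => (j' != c.2 :> nat) ==> a c (c.1, j')) ords)) cells.

Definition alt_stepA (c c' : cell) : bool :=
  ((c.1 != c'.1 :> nat) && (c.2 == c'.2 :> nat) && a c c') ||
  ((c.1 == c'.1 :> nat) && (c.2 != c'.2 :> nat) && a c' c).

Definition alt_stepB (c c' : cell) : bool :=
  ((c.1 != c'.1 :> nat) && (c.2 == c'.2 :> nat) && a c' c) ||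
  ((c.1 == c'.1 :> nat) && (c.2 != c'.2 :> nat) && a c c').

(* Nested [if]s rather than [&&]: [vm_compute] evaluates both arguments of [andb],
   and the tests are ordered from the cheapest and most selective to the costliest. *)
Definition goodb : bool :=
  if no_sinkb then if no_sourceb then if cond2b && cond1b
  then acyclicb alt_stepA cells && acyclicb alt_stepB cells
  else false else false else false.

Variable D : diagram.
Hypothesis arrowE : forall c c', arrow D c c' = a c c'.

Lemma cond1P : cond1 D <-> cond1b.
Proof.
split=> [[rows cols]|/allP no_cyc].
  apply/allP => _ /[!mem_cat] /orP[] /mapP[k _ ->]; rewrite -!arrowE;
    apply/andP; split; apply/negP => /and3P[h1 h2 h3].
  - exact: (cols k o0 o1 o2).
  - exact: (cols k o0 o2 o1).
  - exact: (rows k o0 o1 o2).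
  - exact: (rows k o0 o2 o1).
split=> [i j1 j2 j3|j i1 i2 i3] n12 n23 n13 [h1 h2 h3].
  have := no_cyc ((i, o0), (i, o1), (i, o2)); rewrite mem_cat map_f ?orbT ?mem_ords // -!arrowE.
  by move: n12 n23 n13 h1 h2 h3; ord3_cases j1; ord3_cases j2; ord3_cases j3 => //= _ _ _ -> -> ->;
    rewrite ?andbF => /(_ isT).
have := no_cyc ((o0, j), (o1, j), (o2, j)); rewrite mem_cat map_f ?mem_ords // -!arrowE.
by move: n12 n23 n13 h1 h2 h3; ord3_cases i1; ord3_cases i2; ord3_cases i3 => //= _ _ _ -> -> ->;
  rewrite ?andbF => /(_ isT).
Qed.

Lemma cond2P : cond2 D <-> cond2b.
Proof.
split=> [[rows cols]|/andP[rows cols]].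
  apply/andP; split; do 2!apply/all_ordsP => ?; rewrite nat_ord_eqE; apply/implyP => neq;
    apply/negP => /all_ordsP all_arr.
    by apply: (rows _ _ neq) => j; rewrite arrowE.
  by apply: (cols _ _ neq) => i; rewrite arrowE.
split=> [i i'|j j'] neq all_arr.
  move/all_ordsP/(_ i)/all_ordsP/(_ i'): rows; rewrite nat_ord_eqE neq => /negP; apply.
  by apply/all_ordsP => j; rewrite -arrowE.
move/all_ordsP/(_ j)/all_ordsP/(_ j'): cols; rewrite nat_ord_eqE neq => /negP; apply.
by apply/all_ordsP => i; rewrite -arrowE.
Qed.

Lemma no_sinkP : no_sink D <-> no_sinkb.
Proof.
split=> [no_sink|/all_cellsP no_sink c [col row]].
  apply/all_cellsP => c; apply/negP => /andP[/all_ordsP col /all_ordsP row].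
  apply: (no_sink c); split=> [i' neq|j' neq].
    by move: (col i'); rewrite nat_ord_eqE neq arrowE.
  by move: (row j'); rewrite nat_ord_eqE neq arrowE.
case/negP: (no_sink c); apply/andP; split; apply/all_ordsP => k; rewrite nat_ord_eqE;
  apply/implyP => neq; rewrite -arrowE; [exact: col|exact: row].
Qed.

Lemma no_sourceP : no_source D <-> no_sourceb.
Proof.
split=> [no_source|/all_cellsP no_source c [col row]].
  apply/all_cellsP => c; apply/negP => /andP[/all_ordsP col /all_ordsP row].
  apply: (no_source c); split=> [i' neq|j' neq].
    by move: (col i'); rewrite nat_ord_eqE neq arrowE.
  by move: (row j'); rewrite nat_ord_eqE neq arrowE.
case/negP: (no_source c); apply/andP; split; apply/all_ordsP => k; rewrite nat_ord_eqE;
  apply/implyP => neq; rewrite -arrowE; [exact: col|exact: row].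
Qed.

Lemma no_alt_cycleP : no_alt_cycle D <-> acyclicb alt_stepA cells && acyclicb alt_stepB cells.
Proof.
have eqA : stepA D =2 alt_stepA by move=> c c'; rewrite /stepA !arrowE.
have eqB : stepB D =2 alt_stepB by move=> c c'; rewrite /stepB !arrowE.
split=> [no_cyc|/andP[/(acyclicP _ mem_cells) acycA /(acyclicP _ mem_cells) acycB] s [s_nil]].
  apply/andP; split; apply/(acyclicP _ mem_cells) => s s_nil; apply/negP => cyc;
    apply: (no_cyc s); split=> //; [left|right]; by rewrite (eq_cycle eqA) || rewrite (eq_cycle eqB).
rewrite (eq_cycle eqA) (eq_cycle eqB).
by case=> cyc; [case/negP: (acycA s s_nil)|case/negP: (acycB s s_nil)].
Qed.

Lemma goodP : good D <-> goodb.
Proof.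
split=> [[/cond1P c1 /cond2P c2 /no_sinkP c3 /no_sourceP c4 /no_alt_cycleP]|].
  by rewrite /goodb c1 c2 c3 c4.
rewrite /goodb; case: ifP => [/no_sinkP c3|//]; case: ifP => [/no_sourceP c4|//].
case: ifP => [/andP[/cond2P c2 /cond1P c1]|//] /no_alt_cycleP c5.
by split.
Qed.
End DiagramChecks.

Section CrossProduct.
Local Open Scope ring_scope.
Variable K : comNzRingType.

Lemma sum_ord3 (F : 'I_3 -> K) : \sum_k F k = F o0 + F o1 + F o2.
Proof. by rewrite !big_ord_recr big_ord0 /= add0r; congr (F _ + F _ + F _); apply: val_inj. Qed.

Definition cross (u v : 'I_3 -> K) (k : 'I_3) : K :=
  match nat_of_ord k with
  | 0 => u o1 * v o2 - u o2 * v o1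
  | 1 => u o2 * v o0 - u o0 * v o2
  | _ => u o0 * v o1 - u o1 * v o0
  end.

(* Cramer's rule in the basis (1, u, v): the triple product [\sum_k cross u v k]
   is the determinant of that basis. *)
Lemma cross_cramer (u v x : 'I_3 -> K) j :
  (\sum_k cross u v k) * x j = (\sum_k x k) * cross u v j
    + (\sum_k u k * x k) * cross v (fun=> 1) j + (\sum_k v k * x k) * cross (fun=> 1) u j.
Proof. by rewrite !sum_ord3; ord3_cases j; rewrite /cross /=; ring. Qed.

Definition equalizer_weights (M : 'I_3 -> 'I_3 -> K) : 'I_3 -> K :=
  cross (fun k => M o0 k - M o1 k) (fun k => M o1 k - M o2 k).

Lemma equalizer_weights_equalize M i :
  \sum_k M i k * equalizer_weights M k = \sum_k M o0 k * equalizer_weights M k.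
Proof. by rewrite !sum_ord3; ord3_cases i; rewrite /equalizer_weights /cross /=; ring. Qed.

Lemma equalizer_weights_unique M x : (forall i, \sum_k M i k * x k = \sum_k M o0 k * x k) ->
  forall j, (\sum_k equalizer_weights M k) * x j = (\sum_k x k) * equalizer_weights M j.
Proof.
move=> eq_rows j; rewrite cross_cramer.
have -> : \sum_k (M o0 k - M o1 k) * x k = 0.
  by rewrite (eq_bigr _ (fun k _ => mulrBl _ _ _)) sumrB (eq_rows o1) subrr.
have -> : \sum_k (M o1 k - M o2 k) * x k = 0.
  by rewrite (eq_bigr _ (fun k _ => mulrBl _ _ _)) sumrB (eq_rows o1) (eq_rows o2) subrr.
by rewrite !mul0r !addr0.
Qed.

End CrossProduct.

Lemma div_gt0_of_mul_gt0 (R : realFieldType) (x y : R) : (0 < x * y -> 0 < x / y)%R.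
Proof.
move=> xy; have y0 : y != 0%R by apply: contraTneq xy => ->; rewrite mulr0 ltxx.
have -> : (x / y = x * y / y ^+ 2)%R by rewrite expr2 invfM mulrA mulfK.
by rewrite divr_gt0 // exprn_even_gt0.
Qed.

Section ZeroSumNash.
Local Open Scope ring_scope.
Variables (R : realType) (A : 'M[R]_3) (p : 'rV[R]_3) (q : 'cV[R]_3) (u : R).
Hypotheses (pP : probRow p) (qP : probCol q).
Hypotheses (p_gt0 : forall i, 0 < p 0 i) (q_gt0 : forall j, 0 < q j 0).
Hypotheses (rows_u : forall i, (A *m q) i 0 = u) (cols_u : forall j, (p *m A) 0 j = u).

Lemma payoffN p' q' : payoff p' (- A) q' = - payoff p' A q'.
Proof. by rewrite /payoff mulmxN mulNmx mxE. Qed.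

Lemma payoff_against_q p' : probRow p' -> payoff p' A q = u.
Proof.
move=> [_ sum1]; rewrite payoff_rows (eq_bigr (fun i => p' 0 i * u)) => [|i _]; last by rewrite rows_u.
by rewrite -mulr_suml sum1 mul1r.
Qed.

Lemma payoff_against_p q' : probCol q' -> payoff p A q' = u.
Proof.
move=> [_ sum1]; rewrite payoff_cols (eq_bigr (fun j => u * q' j 0)) => [|j _]; last by rewrite cols_u.
by rewrite -mulr_sumr sum1 mulr1.
Qed.

Lemma equalizing_nash : nash A (- A) p q.
Proof.
split=> //; split=> //; split.
  by split=> // p' p'P; rewrite !payoff_against_q.
by split=> // q' q'P; rewrite !payoffN !payoff_against_p.
Qed.

Lemma nash_equalizing p' q' : nash A (- A) p' q' ->
  (forall i, (A *m q') i 0 = u) /\ (forall j, (p' *m A) 0 j = u).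
Proof.
move=> [p'P [q'P [[_ brA] [_ brB]]]].
have u_le : u <= payoff p' A q' by rewrite -(payoff_against_p q'P); apply: brA.
have le_u : payoff p' A q' <= u.
  by have := brB q qP; rewrite !payoffN (payoff_against_q p'P) lerN2.
have [_ p_sum1] := pP; have [_ q_sum1] := qP.
split; [apply: (convex_eq_max p_gt0 p_sum1)|apply: (convex_eq_min q_gt0 q_sum1)].
- by move=> i; rewrite -payoff_delta_row (le_trans _ le_u) //; apply/brA/probRow_delta.
- by rewrite -payoff_rows payoff_against_p.
- move=> j; rewrite -payoff_delta_col (le_trans u_le) //.
  by have := brB _ (@probCol_delta R j); rewrite !payoffN lerN2.
- by rewrite -(payoff_against_q p'P) payoff_cols; apply: eq_bigr => j _; rewrite mulrC.
Qed.

End ZeroSumNash.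

Section EqualizerCriterion.
Local Open Scope ring_scope.
Variable R : realType.

Definition equalizer (M : 'I_3 -> 'I_3 -> R) (j : 'I_3) : R :=
  equalizer_weights M j / \sum_k equalizer_weights M k.

Lemma equalizer_weights_sum_neq0 M :
  (forall j, 0 < equalizer M j) -> \sum_k equalizer_weights M k != 0.
Proof. by move=> pos; apply: contraTneq (pos o0) => S0; rewrite /equalizer S0 invr0 mulr0 ltxx. Qed.

Lemma equalizer_sum1 M : (forall j, 0 < equalizer M j) -> \sum_k equalizer M k = 1.
Proof. by move=> /equalizer_weights_sum_neq0 S0; rewrite -mulr_suml divff. Qed.

Lemma equalizer_equalizes M i :
  \sum_k M i k * equalizer M k = \sum_k M o0 k * equalizer M k.
Proof.
have scale N : \sum_k N k * equalizer M k =
    (\sum_k N k * equalizer_weights M k) / \sum_k equalizer_weights M k.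
  by rewrite mulr_suml; apply: eq_bigr => k _; rewrite mulrA.
by rewrite !scale equalizer_weights_equalize.
Qed.

Lemma equalizer_unique M x : (forall j, 0 < equalizer M j) -> \sum_k x k = 1 ->
  (forall i, \sum_k M i k * x k = \sum_k M o0 k * x k) -> forall j, x j = equalizer M j.
Proof.
move=> /equalizer_weights_sum_neq0 S0 x_sum1 eq_rows j.
by rewrite /equalizer -[equalizer_weights M j]mul1r -x_sum1 -equalizer_weights_unique // mulrC mulKf.
Qed.

Lemma interior_equalizers_nash (A : 'M[R]_3) :
  (forall j, 0 < equalizer A j) -> (forall i, 0 < equalizer (fun i j => A j i) i) ->
  assumption3 A (- A).
Proof.
set AT := fun i j => A j i => q_gt0 p_gt0.
pose q := \col_i equalizer A i; pose p := \row_j equalizer AT j.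
have qE i : q i 0 = equalizer A i by rewrite mxE.
have pE j : p 0 j = equalizer AT j by rewrite mxE.
have qP : probCol q by split=> [i|]; rewrite ?qE ?ltW // (eq_bigr _ (fun i _ => qE i)) equalizer_sum1.
have pP : probRow p by split=> [j|]; rewrite ?pE ?ltW // (eq_bigr _ (fun j _ => pE j)) equalizer_sum1.
have rows_u i : (A *m q) i 0 = \sum_k A o0 k * equalizer A k.
  by rewrite mxE (eq_bigr _ (fun k _ => congr1 _ (qE k))) equalizer_equalizes.
have cols_v j : (p *m A) 0 j = \sum_k AT o0 k * equalizer AT k.
  rewrite mxE (eq_bigr (fun k => AT j k * equalizer AT k)) ?equalizer_equalizes // => k _.
  by rewrite pE mulrC.
have u_v : \sum_k A o0 k * equalizer A k = \sum_k AT o0 k * equalizer AT k.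
  apply: (@equalized_values _ _ _ (fun i j => A i j) (equalizer AT) (equalizer A) _ _
    (equalizer_sum1 p_gt0) (equalizer_sum1 q_gt0)) => [i|j].
    by rewrite -(rows_u i) mxE; apply: eq_bigr => k _; rewrite qE.
  by rewrite -(cols_v j) mxE; apply: eq_bigr => k _; rewrite pE.
rewrite -u_v in cols_v.
have p_pos j : 0 < p 0 j by rewrite pE.
have q_pos i : 0 < q i 0 by rewrite qE.
exists p, q; split=> //; first exact: equalizing_nash.
move=> p' q' nash'; have [rows' cols'] := nash_equalizing pP qP p_pos q_pos rows_u cols_v nash'.
have [p'P [q'P _]] := nash'; split.
  apply/rowP => j; rewrite pE; apply: (equalizer_unique p_gt0 p'P.2) => i.
  have col_sum i0 : \sum_k AT i0 k * p' 0 k = (p' *m A) 0 i0.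
    by rewrite mxE; apply: eq_bigr => k _; rewrite mulrC.
  by rewrite !col_sum !cols'.
apply/colP => i; rewrite qE; apply: (equalizer_unique q_gt0 q'P.2) => k.
have row_sum i0 : \sum_j A i0 j * q' j 0 = (A *m q') i0 0 by rewrite mxE.
by rewrite !row_sum !rows'.
Qed.

End EqualizerCriterion.

Section IntegerEqualizers.
Local Open Scope ring_scope.

Lemma equalizer_weights_intr (R : realType) (M : 'I_3 -> 'I_3 -> int) (N : 'I_3 -> 'I_3 -> R) :
  (forall i j, N i j = (M i j)%:~R) -> forall j, equalizer_weights N j = (equalizer_weights M j)%:~R.
Proof. by move=> NM j; ord3_cases j; rewrite /equalizer_weights /cross /= !NM !(intrB, intrM). Qed.

Definition positive_equalizer (M : 'I_3 -> 'I_3 -> int) : bool :=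
  let w := equalizer_weights M in all (fun j => 0 < w j * (w o0 + w o1 + w o2)) ords.

Lemma positive_equalizerP (R : realType) (M : 'I_3 -> 'I_3 -> int) (N : 'I_3 -> 'I_3 -> R) :
  (forall i j, N i j = (M i j)%:~R) -> positive_equalizer M -> forall j, 0 < equalizer N j.
Proof.
move=> NM /all_ordsP pos j; apply: div_gt0_of_mul_gt0.
by rewrite sum_ord3 !(equalizer_weights_intr NM) -!intrD -intrM ltr0z; apply: pos.
Qed.
End IntegerEqualizers.

(* Row payoffs [A] of zero-sum games [(A, -A)], one for each class of diagrams. *)
Definition games : seq (seq (seq nat)) := [::
  [:: [:: 9; 6; 2]; [:: 1; 5; 8]; [:: 3; 4; 7]];
  [:: [:: 7; 5; 2]; [:: 1; 6; 9]; [:: 3; 4; 8]];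
  [:: [:: 6; 3; 1]; [:: 2; 8; 9]; [:: 4; 5; 7]];
  [:: [:: 9; 6; 2]; [:: 3; 4; 8]; [:: 1; 5; 7]];
  [:: [:: 8; 5; 2]; [:: 3; 4; 9]; [:: 1; 6; 7]];
  [:: [:: 8; 5; 1]; [:: 2; 4; 9]; [:: 3; 6; 7]];
  [:: [:: 6; 4; 3]; [:: 2; 5; 9]; [:: 1; 7; 8]];
  [:: [:: 8; 4; 1]; [:: 2; 5; 9]; [:: 3; 6; 7]];
  [:: [:: 6; 7; 2]; [:: 4; 1; 9]; [:: 3; 5; 8]];
  [:: [:: 5; 7; 1]; [:: 6; 3; 9]; [:: 2; 4; 8]];
  [:: [:: 5; 6; 2]; [:: 4; 1; 9]; [:: 3; 7; 8]];
  [:: [:: 4; 6; 1]; [:: 5; 2; 9]; [:: 3; 7; 8]];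
  [:: [:: 17; 18; 13]; [:: 7; 1; 28]; [:: 9; 20; 21]];
  [:: [:: 5; 8; 2]; [:: 6; 4; 7]; [:: 1; 3; 9]];
  [:: [:: 6; 9; 1]; [:: 5; 3; 7]; [:: 2; 4; 8]];
  [:: [:: 5; 9; 2]; [:: 6; 3; 7]; [:: 1; 4; 8]];
  [:: [:: 5; 6; 1]; [:: 4; 2; 8]; [:: 3; 7; 9]];
  [:: [:: 4; 7; 2]; [:: 5; 1; 6]; [:: 3; 8; 9]];
  [:: [:: 3; 8; 4]; [:: 9; 1; 7]; [:: 2; 5; 6]];
  [:: [:: 7; 14; 8]; [:: 26; 3; 20]; [:: 2; 15; 17]];
  [:: [:: 1; 9; 6]; [:: 7; 4; 5]; [:: 2; 3; 8]];
  [:: [:: 4; 9; 5]; [:: 8; 1; 6]; [:: 2; 3; 7]];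
  [:: [:: 6; 7; 2]; [:: 9; 1; 5]; [:: 3; 4; 8]]].

Definition entry (L : seq (seq nat)) (i j : 'I_3) : nat := nth 0 (nth [::] L i) j.

Definition nat_game_arrow (L : seq (seq nat)) (c c' : cell) : bool :=
  ((c.2 == c'.2 :> nat) && (entry L c.1 c.2 < entry L c'.1 c'.2)) ||
  ((c.1 == c'.1 :> nat) && (entry L c'.1 c'.2 < entry L c.1 c.2)).

Definition game_code (L : seq (seq nat)) : seq bool := encode (nat_game_arrow L).

Definition game_matrix (R : realType) (L : seq (seq nat)) : 'M[R]_3 :=
  \matrix_(i, j) (entry L i j)%:R%R.

Definition nondegenerate (L : seq (seq nat)) : bool :=
  all (fun i : 'I_3 => all (fun i' : 'I_3 => all (fun j : 'I_3 =>
    (i == i' :> nat) || (entry L i j != entry L i' j) && (entry L j i != entry L j i'))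
  ords) ords) ords.

Definition realizable (L : seq (seq nat)) : bool :=
  let M i j := Posz (entry L i j) in
  [&& nondegenerate L, positive_equalizer M & positive_equalizer (fun i j => M j i)].

Lemma games_realizable : all realizable games.
Proof. by vm_compute. Qed.

Section GameRealization.
Local Open Scope ring_scope.
Variable R : realType.

Lemma game_matrix_spec L : L \in games ->
  let A := game_matrix R L in
  [/\ assumption1 A (- A), assumption3 A (- A), zero_sum A (- A)
    & game_diagram A (- A) = diagram_of (game_code L)].
Proof.
move=> L_in A; have /and3P[nondeg q_pos p_pos] := allP games_realizable L L_in.
have A_int i j : A i j = (Posz (entry L i j))%:~R by rewrite mxE pmulrn.
have a1 : assumption1 A (- A).
  split=> [i i' j ii'|i j j' jj']; rewrite !mxE ?eqr_opp eqr_nat.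
    move/all_ordsP/(_ i)/all_ordsP/(_ i')/all_ordsP/(_ j): nondeg.
    by rewrite nat_ord_eqE (negbTE ii') => /andP[].
  move/all_ordsP/(_ j)/all_ordsP/(_ j')/all_ordsP/(_ i): nondeg.
  by rewrite nat_ord_eqE (negbTE jj') => /andP[].
split=> //.
- apply: interior_equalizers_nash; [exact: positive_equalizerP q_pos|exact: positive_equalizerP p_pos].
- by exists 1, 1, (fun=> 0), (fun=> 0); split=> // i j; rewrite [(- A) i j]mxE !mul1r !addr0 subrr.
rewrite -[LHS](diagram_ofK (game_is_diagram a1)); congr diagram_of; apply: eq_encode => c c'.
by rewrite /arrow inE /= !mxE ltrN2 !ltr_nat.
Qed.

End GameRealization.

Definition rep_codes : seq (seq bool) := [seq game_code L | L <- games].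

Definition rep_images : seq (seq bool) :=
  [seq relabel_code (relabelling k) r | r <- rep_codes, k <- relabellings].

Definition enumeration_complete : bool :=
  let images := rep_images in
  all (fun x => if goodb (decode x) then x \in images else true) (line_words 6).

Lemma enumeration_complete_holds : enumeration_complete.
Proof. by vm_compute. Qed.

Lemma rep_images_good : all (fun y => goodb (decode y)) rep_images.
Proof. by vm_compute. Qed.

Lemma rep_codes_inequivalent_check : all (fun r1 => all (fun r2 => all (fun k =>
  (relabel_code (relabelling k) r2 == r1) ==> (r1 == r2)) relabellings) rep_codes) rep_codes.
Proof. by vm_compute. Qed.

Lemma rep_codes_uniq : uniq rep_codes.
Proof. by vm_compute. Qed.

Lemma size_encode a : size (encode a) = 18.
Proof. by []. Qed.

Lemma rep_code_size r : r \in rep_codes -> size r = 18.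
Proof. by move=> /mapP[L _ ->]. Qed.

Theorem classification D : is_diagram D -> good D ->
  exists2 r, r \in rep_codes & comb_equiv D (diagram_of r).
Proof.
move=> DD goodD; have Dx := diagram_ofK DD; set x := encode (arrow D) in Dx.
have x_words : x \in line_words 6 by apply: encode_line_words; case: goodD.
have x_good : goodb (decode x) by apply/(goodP (arrow_diagram_of x)); rewrite Dx.
have := allP enumeration_complete_holds x x_words; rewrite x_good => /allpairsP[[r k] [r_in k_in /= x_eq]].
by exists r => //; apply/comb_equivP; exists k; rewrite // -Dx x_eq relabel_diagram_of.
Qed.

Theorem good_comb_equiv D1 D2 : is_diagram D1 -> good D1 -> comb_equiv D1 D2 -> good D2.
Proof.
move=> DD1 good1 e12; have [r r_in e1r] := classification DD1 good1.
have /comb_equivP[k k_in ->] := comb_equiv_trans (comb_equiv_sym e12) e1r.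
rewrite relabel_diagram_of //; apply/(goodP (arrow_diagram_of _)).
by apply: (allP rep_images_good); apply/allpairsP; exists (r, k).
Qed.

Theorem rep_codes_inequivalent r1 r2 : r1 \in rep_codes -> r2 \in rep_codes ->
  comb_equiv (diagram_of r1) (diagram_of r2) -> r1 = r2.
Proof.
move=> r1_in r2_in /comb_equivP[k k_in]; rewrite relabel_diagram_of //.
move/(congr1 (fun D => encode (arrow D))).
rewrite !encode_diagram_of ?size_encode ?rep_code_size // => r1_eq.
move/allP/(_ r1 r1_in)/allP/(_ r2 r2_in)/allP/(_ k k_in): rep_codes_inequivalent_check.
by rewrite r1_eq eqxx => /eqP.
Qed.

Theorem mainTheorem1 (R : realType) :
  (forall D : diagram, is_diagram D ->
     ((exists A B : 'M[R]_3, [/\ assumption1 A B, assumption3 A B, zero_sum A B &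
                               comb_equiv (game_diagram A B) D])
      <-> good D))
  /\
  (exists reps : seq diagram,
     [/\ size reps = 23, uniq reps,
         (forall D, D \in reps -> is_diagram D /\ good D),
         (forall D1 D2, D1 \in reps -> D2 \in reps -> comb_equiv D1 D2 -> D1 = D2) &
         (forall D, is_diagram D -> good D -> exists2 D', D' \in reps & comb_equiv D D')]).
Proof.
split=> [D DD|].
  split=> [[A [B [a1 a3 zs e]]]|goodD].
    exact: good_comb_equiv (game_is_diagram a1) (zero_sum_game_good a3 zs) e.
  have [_ /mapP[L L_in ->] e] := classification DD goodD.
  have [a1 a3 zs G_eq] := game_matrix_spec R L_in.
  by exists (game_matrix R L), (- game_matrix R L)%R; split=> //; rewrite G_eq; apply: comb_equiv_sym.
exists [seq diagram_of r | r <- rep_codes]; split.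
- by rewrite size_map.
- rewrite map_inj_in_uniq ?rep_codes_uniq // => r1 r2 r1_in r2_in eq12.
  by rewrite -(encode_diagram_of (rep_code_size r1_in)) eq12 encode_diagram_of ?rep_code_size.
- move=> _ /mapP[_ /mapP[L L_in ->] ->]; split; first exact: diagram_of_is_diagram.
  have [_ a3 zs <-] := game_matrix_spec R L_in; exact: zero_sum_game_good.
- by move=> _ _ /mapP[r1 r1_in ->] /mapP[r2 r2_in ->] /(rep_codes_inequivalent r1_in r2_in) ->.
- move=> D DD goodD; have [r r_in e] := classification DD goodD.
  by exists (diagram_of r) => //; apply: map_f.
Qed.
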